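(* If the root system $\Phi$ is of type $C_n$, the closures of the regions of the hyperplane arrangement $\mathcal H_\Phi$ coincide with the cones on the facets of the root polytope $\mathcal P_\Phi$.
   Context: $\Phi$ is an irreducible root system of rank $n$ in the Euclidean space $E=\operatorname{span}_{\mathbb R}\Phi$; $\mathcal P_\Phi=\operatorname{conv}(\Phi)$. $\mathcal H_\Phi$ is the central hyperplane arrangement in $E$ consisting of the linear hyperplanes $\operatorname{span}_{\mathbb R}F$ for all faces $F$ of $\mathcal P_\Phi$ of codimension 2 (i.e. of dimension $n-2$). A region of $\mathcal H_\Phi$ is a connected component of $E\setminus\bigcup_{H\in\mathcal H_\Phi}H$. The cone on a facet $F$ is $\{tx\mid t\ge0,\ x\in F\}$. *)

From HB Require Import structures.
From mathcomp Require Import all_boot all_order all_algebra.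
From mathcomp Require Import all_classical all_reals topology normedtype.
Import numFieldNormedType.Exports.
Set Implicit Arguments. Unset Strict Implicit. Unset Printing Implicit Defensive.
Import Order.TTheory GRing.Theory Num.Theory.
Local Open Scope classical_set_scope.
Local Open Scope ring_scope.

Section Defs.
Variables (R : realType) (n : nat).
Local Notation V := 'rV[R]_n.

Definition evec (i : 'I_n) : V := delta_mx 0 i.

Definition dotv (x y : V) : R := \sum_(i < n) x 0 i * y 0 i.

Definition rootsC : set V :=
  [set x | (exists i : 'I_n, x = 2%:R *: evec i \/ x = - (2%:R *: evec i)) \/
           (exists (i j : 'I_n) (s1 s2 : bool), i != j /\
              x = (-1) ^+ s1 *: evec i + (-1) ^+ s2 *: evec j)].

Definition conv (S : set V) : set V :=
  [set x | exists (k : nat) (p : 'I_k -> V) (w : 'I_k -> R),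
     (forall i, S (p i)) /\ (forall i, 0 <= w i) /\
     \sum_(i < k) w i = 1 /\ x = \sum_(i < k) w i *: p i].

(* F is a face of P: the intersection of P with a (weakly) supporting
   hyperplane (this includes P itself and the empty face). *)
Definition is_face (P F : set V) : Prop :=
  exists (c : V) (b : R), (forall x, P x -> dotv c x <= b) /\
    F = [set x | P x /\ dotv c x = b].

(* F is nonempty and its affine hull has dimension d *)
Definition affdim (F : set V) (d : nat) : Prop :=
  exists x0, F x0 /\ exists s : seq V, (forall y, y \in s -> F y) /\
    \dim <<[seq y - x0 | y <- s]>>%VS = d /\
    (forall x, F x -> (x - x0) \in <<[seq y - x0 | y <- s]>>%VS).

Definition lin_span (S : set V) : set V :=
  [set x | exists s : seq V, (forall y, y \in s -> S y) /\ x \in <<s>>%VS].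

Definition arrangement (P : set V) : set (set V) :=
  [set H | exists F, is_face P F /\ affdim F (n - 2) /\ H = lin_span F].

Definition regions (A : set (set V)) : set (set V) :=
  [set C | exists x : V, (~` (\bigcup_(H in A) H)) x /\
     C = connected_component (~` (\bigcup_(H in A) H)) x].

Definition facets (P : set V) : set (set V) :=
  [set F | is_face P F /\ affdim F (n - 1)].

Definition cone (F : set V) : set V :=
  [set y | exists t x, 0 <= t /\ F x /\ y = t *: x].

End Defs.

From Pilot Require Import Defs.
From HB Require Import structures.
From mathcomp Require Import all_boot all_order all_algebra.
From mathcomp Require Import all_classical all_reals topology normedtype.
From mathcomp Require Import ring lra zify.
Import numFieldNormedType.Exports.
Import Order.TTheory GRing.Theory Num.Theory.
Set Implicit Arguments. Unset Strict Implicit. Unset Printing Implicit Defensive.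
Local Open Scope classical_set_scope.
Local Open Scope ring_scope.

(* The root polytope of C_n is the cross-polytope {x | sum_i |x_i| <= 2}, whose
   vertices are the long roots +-2 e_i.  A linear form c attains its maximum
   2 max_i |c_i| on it exactly on the convex hull of the vertices 2 sign(c_i) e_i
   with |c_i| maximal, a face of dimension (number of such i) - 1 whose linear
   span is cut out by x_j = 0 for the other coordinates j.  Hence the
   codimension-2 faces span the coordinate hyperplanes, and the facets are the
   faces where all |c_i| are equal, whose cones are the closed orthants.  The
   complement of the coordinate hyperplanes has the open orthants as connected
   components, and their closures are again the closed orthants. *)

Section RootPolytopeC.
Variables (R : realType) (n : nat).
Local Notation V := 'rV[R]_n.
Local Notation dotv := (@dotv R n).
Local Notation evec := (@evec R n).

Lemma evecE i j : evec i 0 j = (i == j)%:R.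
Proof. by rewrite /Defs.evec mxE /= eq_sym. Qed.

Lemma dotvD c x y : dotv c (x + y) = dotv c x + dotv c y.
Proof. by rewrite /Defs.dotv -big_split; apply: eq_bigr => i _; rewrite mxE mulrDr. Qed.

Lemma dotvZ c a x : dotv c (a *: x) = a * dotv c x.
Proof. by rewrite /Defs.dotv mulr_sumr; apply: eq_bigr => i _; rewrite mxE mulrCA. Qed.

Lemma dotv0 c : dotv c 0 = 0.
Proof. by rewrite -(scale0r 0) dotvZ mul0r. Qed.

Lemma dotvB c x y : dotv c (x - y) = dotv c x - dotv c y.
Proof. by rewrite dotvD -scaleN1r dotvZ mulN1r. Qed.

Lemma dotvC x y : dotv x y = dotv y x.
Proof. by apply: eq_bigr => i _; rewrite mulrC. Qed.

Lemma dotv_evecl j x : dotv (evec j) x = x 0 j.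
Proof.
rewrite /Defs.dotv (bigD1 j) //= evecE eqxx mul1r big1 ?addr0 // => i.
by rewrite evecE eq_sym => /negbTE ->; rewrite mul0r.
Qed.

Lemma dotv_evecr c j : dotv c (evec j) = c 0 j.
Proof. by rewrite dotvC dotv_evecl. Qed.

Lemma span_dotv_eq0 c (X : seq V) : (forall y, y \in X -> dotv c y = 0) ->
  forall x, x \in <<X>>%VS -> dotv c x = 0.
Proof.
move=> X0 x x_span; have : x \in <<in_tuple X>>%VS by [].
move=> /coord_span ->; apply: (big_ind (fun v => dotv c v = 0)) => [|u v u0 v0|i _].
- exact: dotv0.
- by rewrite dotvD u0 v0 addr0.
- by rewrite dotvZ X0 ?mulr0 // mem_nth.
Qed.

Lemma span_coord_eq0 j (X : seq V) : (forall y, y \in X -> y 0 j = 0) ->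
  forall x, x \in <<X>>%VS -> x 0 j = 0.
Proof.
move=> X0 x; rewrite -dotv_evecl; apply: span_dotv_eq0 => y.
by rewrite dotv_evecl; exact: X0.
Qed.

Section AffineDimension.
Variables (F : set V) (c : V) (b : R) (t : seq V).
Hypotheses (b_neq0 : b != 0) (F_dotv : forall x, F x -> dotv c x = b)
  (t_subF : forall y, y \in t -> F y) (F_subt : forall x, F x -> x \in <<t>>%VS).

Local Notation D u x0 := <<[seq y - x0 | y <- u]>>%VS.

Lemma dotv_diff_span u x0 : F x0 -> (forall y, y \in u -> F y) ->
  forall w, w \in D u x0 -> dotv c w = 0.
Proof.
move=> Fx0 uF; apply: span_dotv_eq0 => _ /mapP [y yu ->].
by rewrite dotvB !F_dotv ?subrr //; exact: uF.
Qed.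

Lemma dim_diff_span_line u x0 : F x0 -> (forall y, y \in u -> F y) ->
  \dim (D u x0 + <[x0]>) = (\dim (D u x0)).+1.
Proof.
move=> Fx0 uF; have x0_neq0 : x0 != 0.
  by apply: contraNneq b_neq0 => x00; rewrite -(F_dotv Fx0) x00 dotv0.
rewrite dimv_disjoint_sum ?dim_vline ?x0_neq0 ?addn1 //.
apply/eqP; rewrite -subv0; apply/subvP => w.
rewrite memv_cap memv0 => /andP [/(dotv_diff_span Fx0 uF) + /vlineP [a wE]].
rewrite wE dotvZ F_dotv // => /eqP; rewrite mulf_eq0 (negbTE b_neq0) orbF.
by move=> /eqP ->; rewrite scale0r.
Qed.

Lemma diff_span_line_sub u x0 : F x0 -> (forall y, y \in u -> F y) ->
  (D u x0 + <[x0]> <= <<t>>)%VS.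
Proof.
move=> Fx0 uF; rewrite subv_add -memvE F_subt // andbT.
by apply/span_subvP => _ /mapP [y yu ->]; apply: memvB; apply: F_subt => //; exact: uF.
Qed.

Lemma span_sub_diff_span_line u x0 : (forall x, F x -> x - x0 \in D u x0) ->
  (<<t>> <= D u x0 + <[x0]>)%VS.
Proof.
move=> Fu; apply/span_subvP => y yt; rewrite -(subrK x0 y).
by apply: memv_add; [exact/Fu/t_subF | exact: memv_line].
Qed.

Lemma span_eq_diff_span_line x0 : F x0 -> <<t>>%VS = (D t x0 + <[x0]>)%VS.
Proof.
move=> Fx0; apply/subv_anti; rewrite diff_span_line_sub // andbT.
apply/span_subvP => y yt; rewrite -(subrK x0 y).
by apply: memv_add; [exact/memv_span/map_f | exact: memv_line].
Qed.

Lemma sub_mem_diff_span x0 x : F x0 -> F x -> x - x0 \in D t x0.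
Proof.
move=> Fx0 Fx; move: (F_subt Fx); rewrite (span_eq_diff_span_line Fx0).
move=> /memv_addP [u uD [_ /vlineP [a ->] xE]].
have := F_dotv Fx; rewrite xE dotvD (dotv_diff_span Fx0 t_subF uD) add0r.
rewrite dotvZ F_dotv // => /(congr1 (fun r => r / b)); rewrite divff // mulfK //.
by move=> ->; rewrite scale1r addrK.
Qed.

(* Since the hyperplane [dotv c x = b] misses the origin, the line through a point
   of [F] meets the direction space of [F] trivially, so the linear span of [F]
   has one dimension more than its affine hull. *)
Lemma affdimE x0 d : F x0 -> affdim F d <-> \dim <<t>> = d.+1.
Proof.
move=> Fx0; split.
  move=> [y0 [Fy0 [s [sF [<- Fs]]]]]; rewrite -(dim_diff_span_line Fy0 sF).
  by congr (\dim _); apply/subv_anti; rewrite diff_span_line_sub // span_sub_diff_span_line.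
rewrite (span_eq_diff_span_line Fx0) dim_diff_span_line // => -[dimD].
exists x0; split => //; exists t; split => //; split => // x Fx.
exact: sub_mem_diff_span.
Qed.

End AffineDimension.

Definition orthant (c : V) := [set y : V | forall i, 0 <= c 0 i * y 0 i].
Definition open_orthant (c : V) := [set y : V | forall i, 0 < c 0 i * y 0 i].
Definition coord_nonzero := [set y : V | forall i, y 0 i != 0].

Lemma open_orthant_self x : coord_nonzero x -> open_orthant x x.
Proof. by move=> x_neq0 i; rewrite -expr2 exprn_even_gt0 ?x_neq0 ?orbT. Qed.

Lemma continuous_coord_mul (c : V) i : continuous (fun y : V => c 0 i * y 0 i).
Proof.
move=> y.
exact: (continuous_comp (@coord_continuous R 1 n 0 i y) (@mulrl_continuous R (c 0 i) _)).
Qed.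

Lemma continuous_line (y x : V) : continuous (fun t : R => y + t *: x).
Proof. by move=> t; apply: cvgD; [exact: cvg_cst | exact: cvgZ cvg_id (cvg_cst _)]. Qed.

Lemma open_open_orthant c : open (open_orthant c).
Proof.
rewrite openE => y cy; rewrite /interior.
have cy_nbhs i : nbhs y ((fun z : V => c 0 i * z 0 i) @^-1` [set r | 0 < r]).
  apply: open_nbhs_nbhs; split; last exact: cy.
  by apply: open_comp => [z _|]; [exact: continuous_coord_mul | exact: open_gt].
exact: filterS (filter_forall _ cy_nbhs).
Qed.

Lemma closed_orthant c : closed (orthant c).
Proof.
have -> : orthant c = \bigcap_(i in setT) ((fun z : V => c 0 i * z 0 i) @^-1` [set r | 0 <= r]).
  by apply/seteqP; split => y cy i; [move=> _; exact: cy | exact: cy i I].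
apply: closed_bigI => i _; apply: preimage_closed => [z _|].
  exact: continuous_coord_mul.
exact: closed_ge.
Qed.

(* [y + t c] lies in the open orthant of [c] for every [t > 0]. *)
Lemma closure_open_orthant c : coord_nonzero c -> closure (open_orthant c) = orthant c.
Proof.
move=> c_neq0; apply/seteqP; split => y.
  move=> /(closureS (fun z (cz : open_orthant c z) i => ltW (cz i))).
  exact: closed_orthant.
move=> cy B yB; have yc_cvg : (fun t : R => y + t *: c) @ 0 --> y.
  by rewrite -[X in _ --> X](addr0 y) -(scale0r c); exact: continuous_line.
have /nbhs_ballP [e e0 eB] := yc_cvg B yB.
exists (y + (e / 2) *: c); split.
  move=> i; rewrite !mxE mulrDr mulrCA.
  have : 0 < e / 2 * (c 0 i * c 0 i) by rewrite mulr_gt0 ?divr_gt0 ?open_orthant_self.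
  by have := cy i; lra.
by apply: eB; rewrite /ball /= sub0r normrN ger0_norm ?divr_ge0 ?ltW //; move: e0 => /= e0; lra.
Qed.

Lemma connected_component_coord_nonzero x :
  coord_nonzero x -> connected_component coord_nonzero x = open_orthant x.
Proof.
move=> x_neq0; apply/seteqP; split => y.
  move=> [C [Cx Cnz C_conn] Cy].
  suff CQ : C `&` open_orthant x = C by move: Cy; rewrite -CQ => -[].
  apply: C_conn.
  - by exists x; split => //; exact: open_orthant_self.
  - by exists (open_orthant x) => //; exact: open_open_orthant.
  - exists (orthant x); first exact: closed_orthant.
    apply/seteqP; split => z [Cz xz]; split => // i; first exact: ltW.
    by rewrite lt_def xz andbT mulf_neq0 ?x_neq0 ?Cnz.
move=> xy; exists ((fun t : R => x + t *: (y - x)) @` `[0, 1]).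
- split.
  + by exists 0; rewrite ?scale0r ?addr0 //= in_itv /= lexx ler01.
  + move=> z [t t01 <-] i; move: t01; rewrite /= in_itv /= => /andP [t0 t1].
    apply/negP => /eqP zi.
    have : x 0 i * (x + t *: (y - x)) 0 i
        = (1 - t) * (x 0 i * x 0 i) + t * (x 0 i * y 0 i) by rewrite !mxE; ring.
    rewrite zi mulr0; move: (open_orthant_self x_neq0 i) (xy i).
    set a := x 0 i * x 0 i; set b := x 0 i * y 0 i; nra.
  + apply: connected_continuous_connected; first exact: segment_connected.
    exact/continuous_subspaceT/continuous_line.
- by exists 1; rewrite ?scale1r ?subrKC //= in_itv /= lexx ler01.
Qed.

Lemma lin_spanE (F : set V) (t : seq V) : (forall y, y \in t -> F y) ->
  (forall x, F x -> x \in <<t>>%VS) -> lin_span F = [set x | x \in <<t>>%VS].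
Proof.
move=> tF Ft; apply/seteqP; split => x /=; last by exists t.
move=> [s [sF xs]]; suff /subvP : (<<s>> <= <<t>>)%VS by apply.
by apply/span_subvP => y /sF /Ft.
Qed.

Lemma free_scaled_evecs (s : seq 'I_n) (a : 'I_n -> R) : uniq s ->
  (forall i, a i != 0) -> free [seq a i *: evec i | i <- s].
Proof.
move=> + a_neq0; elim: s => [|i s IH] /=; first by move=> _; exact: nil_free.
move=> /andP [i_notin_s s_uniq]; rewrite free_cons IH // andbT; apply/negP => i_span.
suff : (a i *: evec i) 0 i = 0 by rewrite mxE evecE eqxx mulr1; apply/eqP.
apply: (span_coord_eq0 _ i_span) => _ /mapP [k ks ->]; rewrite mxE evecE.
by rewrite (_ : k == i = false) ?mulr0 //; apply: contraNF i_notin_s => /eqP <-.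
Qed.

Lemma dim_span_scaled_evecs (s : seq 'I_n) (a : 'I_n -> R) : uniq s ->
  (forall i, a i != 0) -> \dim <<[seq a i *: evec i | i <- s]>> = size s.
Proof. by move=> s_uniq a_neq0; rewrite (eqP (free_scaled_evecs s_uniq a_neq0)) size_map. Qed.

Definition norm1 (x : V) := \sum_i `|x 0 i|.

Lemma norm1D x y : norm1 (x + y) <= norm1 x + norm1 y.
Proof. by rewrite -big_split ler_sum // => i _; rewrite mxE ler_normD. Qed.

Lemma norm1Z a x : norm1 (a *: x) = `|a| * norm1 x.
Proof. by rewrite mulr_sumr; apply: eq_bigr => i _; rewrite mxE normrM. Qed.

Lemma norm1N x : norm1 (- x) = norm1 x.
Proof. by rewrite -scaleN1r norm1Z normrN1 mul1r. Qed.

Lemma norm1_eq0 x : (norm1 x == 0) = (x == 0).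
Proof.
apply/eqP/eqP => [x0|->]; last by rewrite /norm1 big1 // => i _; rewrite mxE normr0.
apply/rowP => i; rewrite mxE; apply/normr0_eq0.
exact: (psumr_eq0P (fun i _ => normr_ge0 (x 0 i)) x0).
Qed.

Lemma norm1_evec i : norm1 (evec i) = 1.
Proof.
rewrite /norm1 (bigD1 i) //= evecE eqxx normr1 big1 ?addr0 // => j ji.
by rewrite evecE eq_sym (negbTE ji) normr0.
Qed.

Lemma norm1_conv (S : set V) r x : (forall p, S p -> norm1 p <= r) ->
  conv S x -> norm1 x <= r.
Proof.
move=> Sr [k [p [w [Sp [w_ge0 [w1 ->]]]]]].
apply: (@le_trans _ _ (\sum_(i < k) w i * norm1 (p i))).
  apply: (big_rec2 (fun v r => norm1 v <= r)) => [|i y v _ yv].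
    by rewrite /norm1 big1 // => j _; rewrite mxE normr0.
  by apply: le_trans (norm1D _ _) _; rewrite norm1Z ger0_norm // lerD2l.
rewrite -[r]mul1r -w1 mulr_suml; apply: ler_sum => i _.
by rewrite ler_wpM2l ?Sr.
Qed.

Lemma conv_sub (S : set V) p : S p -> conv S p.
Proof.
move=> Sp; exists 1%N, (fun _ => p), (fun _ => 1); do 2!split => //.
by rewrite !big_ord1 scale1r.
Qed.

Local Notation P := (conv (@rootsC R n)).

Definition long_root (i : 'I_n) (b : bool) : V := (2 * (-1) ^+ b) *: evec i.

Lemma long_root_coef_neq0 (b : bool) : 2 * (-1) ^+ b != 0 :> R.
Proof. by rewrite mulf_neq0 ?pnatr_eq0 ?expf_neq0 ?oppr_eq0 ?oner_eq0. Qed.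

Lemma long_rootE i b j : long_root i b 0 j = 2 * (-1) ^+ b * (i == j)%:R.
Proof. by rewrite mxE evecE. Qed.

Lemma rootsC_long_root i b : rootsC (long_root i b).
Proof.
left; exists i; case: b; [right|left]; rewrite /long_root ?expr1 ?expr0 ?mulr1 //.
by rewrite mulrN1 scaleNr.
Qed.

Lemma norm1_rootsC p : rootsC p -> norm1 p <= 2.
Proof.
case=> [[i [->|->]]|[i [j [s1 [s2 [_ ->]]]]]].
- by rewrite norm1Z norm1_evec mulr1 ger0_norm.
- by rewrite norm1N norm1Z norm1_evec mulr1 ger0_norm.
- apply: le_trans (norm1D _ _) _.
  by rewrite !norm1Z !norm1_evec !mulr1 !normrX normrN1 !expr1n.
Qed.

(* [x] is the convex combination of the long roots [2 sign(x_i) e_i] with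
   weights [|x_i| / 2]. *)
Lemma conv_rootsC_norm1 x : norm1 x = 2 -> P x.
Proof.
move=> x2; exists n, (fun i => long_root i (x 0 i < 0)), (fun i => `|x 0 i| / 2).
split; first by move=> i; exact: rootsC_long_root.
split; first by move=> i; rewrite divr_ge0.
split; first by rewrite -mulr_suml -/(norm1 x) x2 divff // pnatr_eq0.
rewrite {1}(row_sum_delta x); apply: eq_bigr => i _; rewrite scalerA.
by congr (_ *: _); case: ltP => xi; rewrite ?(ltr0_norm xi) ?(ger0_norm xi); field.
Qed.

Lemma dotv_le_norm1 (c : V) M x : (forall i, `|c 0 i| <= M) -> dotv c x <= M * norm1 x.
Proof.
move=> cM; rewrite /norm1 mulr_sumr; apply: ler_sum => i _.
by apply: le_trans (ler_norm _) _; rewrite normrM ler_wpM2r.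
Qed.

(* Equality in [dotv_le_norm1] at the maximal value [2 M] forces
   [c_j x_j = M |x_j|] in every coordinate. *)
Lemma dotv_eq_max_coord (c : V) M x j : (forall i, `|c 0 i| <= M) ->
  norm1 x <= 2 -> dotv c x = 2 * M -> M * `|x 0 j| <= c 0 j * x 0 j.
Proof.
move=> cM x2; have M_ge0 : 0 <= M by apply: le_trans (cM j).
rewrite /Defs.dotv (bigD1 j) //=; move: x2; rewrite /norm1 (bigD1 j) //=.
set S := \sum_(i | i != j) c 0 i * x 0 i; set T := \sum_(i | i != j) `|x 0 i|.
move=> x2 cx; have S_le : S <= M * T.
  rewrite /S /T mulr_sumr; apply: ler_sum => i _.
  by apply: le_trans (ler_norm _) _; rewrite normrM ler_wpM2r.
have : 0 <= M * (2 - `|x 0 j| - T) by apply: mulr_ge0 => //; lra.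
by rewrite !mulrBr; lra.
Qed.

Lemma affdim_conv_rootsC_ge d : affdim P d -> (n <= d)%N.
Proof.
move=> [x0 [Px0 [s [sP [<- P_sub]]]]].
set D := <<[seq y - x0 | y <- s]>>%VS.
have evec_D i : evec i \in D.
  (* [4 e_i] is the difference of the points [2 e_i] and [-2 e_i] of [P]. *)
  have := memvZ (4%:R^-1) (memvB (P_sub _ (conv_sub (rootsC_long_root i false)))
                                 (P_sub _ (conv_sub (rootsC_long_root i true)))).
  rewrite opprB addrA subrK /long_root -scalerBl expr0 expr1 scalerA.
  by rewrite (_ : 4%:R^-1 * (2 * 1 - 2 * -1) = 1) ?scale1r //; field.
apply: (@leq_trans (size (enum 'I_n))); first by rewrite size_enum_ord.
rewrite -(dim_span_scaled_evecs (enum_uniq 'I_n) (fun _ => oner_neq0 R)).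
by apply: dimvS; apply/span_subvP => _ /mapP [i _ ->]; rewrite scale1r.
Qed.

Section MaxFace.
Variables (c : V) (i0 : 'I_n).
Hypothesis c_max : forall j, `|c 0 j| <= `|c 0 i0|.
Local Notation M := `|c 0 i0|.

Definition max_face := [set x | P x /\ dotv c x = 2 * M].
Definition max_coords := [pred i | `|c 0 i| == M].
Definition max_face_vertices := [seq long_root i (c 0 i < 0) | i <- enum max_coords].

Lemma dotv_long_root_sign i : dotv c (long_root i (c 0 i < 0)) = 2 * `|c 0 i|.
Proof.
rewrite dotvZ dotv_evecr; case: ltP => ci; rewrite ?expr1 ?expr0.
  by rewrite ltr0_norm //; ring.
by rewrite ger0_norm //; ring.
Qed.

Lemma max_face_long_root : max_face (long_root i0 (c 0 i0 < 0)).
Proof. by split; [exact/conv_sub/rootsC_long_root | rewrite dotv_long_root_sign]. Qed.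

Lemma dotv_le_max x : P x -> dotv c x <= 2 * M.
Proof.
move=> Px; apply: le_trans (dotv_le_norm1 x c_max) _; rewrite mulrC.
by rewrite ler_wpM2r ?(norm1_conv norm1_rootsC).
Qed.

Lemma is_face_max_face : is_face P max_face.
Proof. by exists c, (2 * M); split => // x; exact: dotv_le_max. Qed.

Lemma max_face_vertices_sub y : y \in max_face_vertices -> max_face y.
Proof.
move=> /mapP [i i_max ->]; split; first exact/conv_sub/rootsC_long_root.
by rewrite dotv_long_root_sign; move: i_max; rewrite mem_enum => /eqP ->.
Qed.

Lemma max_face_coord_eq0 x j : max_face x -> ~~ max_coords j -> x 0 j = 0.
Proof.
move=> [Px cx] j_max; have := dotv_eq_max_coord j c_max (norm1_conv norm1_rootsC Px) cx.
have cj_lt : `|c 0 j| < M by rewrite lt_neqAle j_max c_max.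
have := ler_norm (c 0 j * x 0 j); rewrite normrM => cxj_le Mxj_le.
have : (M - `|c 0 j|) * `|x 0 j| <= 0 by lra.
by rewrite pmulr_rle0 ?subr_gt0 // normr_le0 => /eqP.
Qed.

Lemma mem_span_max_face_vertices x :
  x \in <<max_face_vertices>>%VS <-> forall j, ~~ max_coords j -> x 0 j = 0.
Proof.
split => [x_span j j_max | x_max].
  apply: (span_coord_eq0 _ x_span) => _ /mapP [i i_max ->].
  rewrite long_rootE (_ : i == j = false) ?mulr0 //.
  by apply: contraNF j_max => /eqP <-; move: i_max; rewrite mem_enum.
rewrite (row_sum_delta x) (bigID max_coords) /= [X in _ + X]big1 ?addr0; last first.
  by move=> i /x_max ->; rewrite scale0r.
apply: memv_suml => i i_max.
rewrite -[x 0 i](divfK (long_root_coef_neq0 (c 0 i < 0))) -scalerA; apply/memvZ/memv_span.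
by apply: map_f; rewrite mem_enum.
Qed.

Lemma max_face_sub_span x : max_face x -> x \in <<max_face_vertices>>%VS.
Proof. by move=> Fx; apply/mem_span_max_face_vertices => j; exact: max_face_coord_eq0. Qed.

Lemma lin_span_max_face :
  lin_span max_face = [set x | forall j, ~~ max_coords j -> x 0 j = 0].
Proof.
rewrite (lin_spanE max_face_vertices_sub max_face_sub_span).
by apply/seteqP; split => x /mem_span_max_face_vertices.
Qed.

Hypothesis M_gt0 : 0 < M.

Lemma affdim_max_face d : affdim max_face d <-> #|max_coords| = d.+1.
Proof.
have M2_neq0 : 2 * M != 0 by rewrite mulf_neq0 ?pnatr_eq0 ?gt_eqF.
rewrite (affdimE M2_neq0 (fun x (Fx : max_face x) => proj2 Fx) max_face_vertices_sub
  max_face_sub_span _ max_face_long_root).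
rewrite cardE -(dim_span_scaled_evecs (enum_uniq max_coords)
  (a := fun i => 2 * (-1) ^+ (c 0 i < 0)%R)) //.
by move=> i; exact: long_root_coef_neq0.
Qed.

Lemma cone_max_face : (forall i, max_coords i) -> cone max_face = orthant c.
Proof.
move=> all_max; apply/seteqP; split => y /=.
  move=> [t [x [t_ge0 [[Px cx] ->]]]] i; rewrite mxE mulrCA mulr_ge0 //.
  apply: le_trans (dotv_eq_max_coord i c_max (norm1_conv norm1_rootsC Px) cx).
  by apply: mulr_ge0.
move=> cy; have cyE i : c 0 i * y 0 i = M * `|y 0 i|.
  by rewrite -(ger0_norm (cy i)) normrM (eqP (all_max i)).
have [->|y_neq0] := eqVneq y 0.
  exists 0, (long_root i0 (c 0 i0 < 0)); split => //.
  by split; [exact: max_face_long_root | rewrite scale0r].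
have y_gt0 : 0 < norm1 y by rewrite lt_def norm1_eq0 y_neq0 sumr_ge0.
have t_neq0 : norm1 y / 2 != 0 by rewrite gt_eqF ?divr_gt0.
exists (norm1 y / 2), ((norm1 y / 2)^-1 *: y); split; first by rewrite divr_ge0 ?ltW.
split; last by rewrite scalerA divff // scale1r.
split.
  apply: conv_rootsC_norm1; rewrite norm1Z ger0_norm ?invr_ge0 ?divr_ge0 ?ltW //.
  by field; rewrite gt_eqF.
rewrite dotvZ /Defs.dotv; under eq_bigr do rewrite cyE.
by rewrite -mulr_sumr -/(norm1 y); field; rewrite gt_eqF.
Qed.

End MaxFace.

Lemma max_face_of_signs (s : V) (A : pred 'I_n) i0 : i0 \in A ->
  (forall j, `|s 0 j| = (j \in A)%:R) ->
  [/\ forall j, `|s 0 j| <= `|s 0 i0|, 0 < `|s 0 i0| & max_coords s i0 =i A].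
Proof.
move=> i0A sA; split.
- by move=> j; rewrite !sA i0A; case: (j \in A); rewrite ?ler01.
- by rewrite sA i0A.
- move=> j; rewrite !inE /= !sA i0A.
  by case: (j \in A); rewrite ?eqxx // eq_sym oner_eq0.
Qed.

Lemma face_conv_rootsC F d : is_face P F -> affdim F d -> (d < n)%N ->
  exists (c : V) (i0 : 'I_n), [/\ forall j, `|c 0 j| <= `|c 0 i0|, 0 < `|c 0 i0|,
                  F = max_face c i0 & #|max_coords c i0| = d.+1].
Proof.
move=> [c [b [Pcb FE]]] Fd d_lt; have [x0 [Fx0 _]] := Fd; rewrite FE in Fx0; case: Fx0 => Px0 cx0.
have [i0 _ c_max'] := @arg_maxP _ _ _ (Ordinal (leq_ltn_trans (leq0n d) d_lt))
  predT (fun k => `|c 0 k|) isT.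
have c_max j : `|c 0 j| <= `|c 0 i0| := c_max' j isT.
have [M0 | M_neq0] := eqVneq `|c 0 i0| 0.
  suff FP : F = P by move: Fd; rewrite FP => /affdim_conv_rootsC_ge; lia.
  have c0 x : dotv c x = 0.
    rewrite /Defs.dotv big1 // => j _.
    by have := c_max j; rewrite M0 normr_le0 => /eqP ->; rewrite mul0r.
  rewrite FE; apply/seteqP; split => x /=; first by case.
  by move=> Px; split => //; rewrite c0 -cx0 c0.
have M_gt0 : 0 < `|c 0 i0| by rewrite lt_def M_neq0 normr_ge0.
have FE' : F = max_face c i0.
  rewrite FE (_ : b = 2 * `|c 0 i0|) //; apply: le_anti.
  rewrite -{1}cx0 (dotv_le_max c_max Px0) -(@dotv_long_root_sign c i0) Pcb //.
  exact/conv_sub/rootsC_long_root.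
by exists c, i0; split => //; apply/(affdim_max_face c_max M_gt0 d); rewrite -FE'.
Qed.

Lemma arrangement_conv_rootsC : (2 <= n)%N ->
  arrangement P = [set H | exists k, H = [set x : V | x 0 k = 0]].
Proof.
move=> n_ge2; apply/seteqP; split => H /=.
  move=> [F [F_face [Fd ->]]].
  have [|c [i0 [c_max M_gt0 -> card_max]]] := face_conv_rootsC F_face Fd; first lia.
  have /card1P [k k_nmax] : #|[predC max_coords c i0]| == 1%N.
    by move: (cardC (max_coords c i0)); rewrite card_max card_ord; set m := #|_|; lia.
  exists k; rewrite lin_span_max_face //; apply/seteqP; split => x /= xk.
    by apply: xk; have := k_nmax k; rewrite !inE eqxx.
  by move=> j j_nmax; have := k_nmax j; rewrite !inE j_nmax => /esym/eqP ->.
move=> [k ->]; have [i0 i0k] : exists i0 : 'I_n, i0 \in predC1 k.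
  by apply/card_gt0P; rewrite cardC1 card_ord; lia.
pose s : V := \row_j (j != k)%:R.
have s_norm j : `|s 0 j| = (j \in predC1 k)%:R.
  by rewrite mxE inE; case: (j != k); rewrite ?normr1 ?normr0.
have [s_max s_gt0 s_coords] := max_face_of_signs i0k s_norm.
exists (max_face s i0); split; first exact: is_face_max_face.
split.
  by apply/(affdim_max_face s_max s_gt0 _); rewrite (eq_card s_coords) cardC1 card_ord; lia.
rewrite lin_span_max_face //; apply/seteqP; split => x /= xk.
  by move=> j; have := s_coords j; rewrite !inE /= => -> /negbNE /eqP ->.
by apply: xk; have := s_coords k; rewrite !inE eqxx => ->.
Qed.

Lemma orthant_sign (c : V) : coord_nonzero c ->
  orthant (\row_j (-1) ^+ (c 0 j < 0)%R) = orthant c.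
Proof.
move=> c_neq0; apply/seteqP; split => y cy i; have := cy i; rewrite mxE;
  case: ltP => ci; rewrite ?expr1 ?expr0 ?mulN1r ?mul1r ?oppr_ge0.
- by rewrite nmulr_rge0.
- by rewrite pmulr_rge0 // lt_def c_neq0.
- by rewrite nmulr_rge0.
- by rewrite pmulr_rge0 // lt_def c_neq0.
Qed.

Lemma cones_facets_conv_rootsC : (0 < n)%N ->
  [set cone F | F in facets P] = [set orthant c | c in coord_nonzero].
Proof.
move=> n_gt0; apply/seteqP; split => D [F].
  move=> [F_face Fd] <-.
  have [|c [i0 [c_max M_gt0 -> card_max]]] := face_conv_rootsC F_face Fd; first lia.
  have all_max i : max_coords c i0 i.
    have /card0_eq/(_ i) : #|[predC max_coords c i0]| = 0%N.
      by move: (cardC (max_coords c i0)); rewrite card_max card_ord; set m := #|_|; lia.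
    by rewrite !inE => /negbFE.
  exists c; last by rewrite cone_max_face.
  by move=> i; rewrite -normr_gt0 (eqP (all_max i)).
move=> c_neq0 <-; pose s : V := \row_j (-1) ^+ (F 0 j < 0)%R.
have [||s_max s_gt0 s_coords] := @max_face_of_signs s predT (Ordinal n_gt0) => //.
  by move=> j; rewrite mxE normrX normrN1 expr1n.
exists (max_face s (Ordinal n_gt0)); last by rewrite cone_max_face // orthant_sign.
split; first exact: is_face_max_face.
by apply/(affdim_max_face s_max s_gt0 _); rewrite (eq_card s_coords) card_ord; lia.
Qed.

Lemma setC_arrangement_conv_rootsC : (2 <= n)%N ->
  ~` (\bigcup_(H in arrangement P) H) = coord_nonzero.
Proof.
move=> n_ge2; rewrite arrangement_conv_rootsC //; apply/seteqP; split => x /=.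
  move=> x_notin k; apply/eqP => xk; apply: x_notin.
  by exists [set z : V | z 0 k = 0] => //; exists k.
by move=> x_neq0 [_ [k ->] /= /eqP]; apply/negP.
Qed.

End RootPolytopeC.

Theorem theorem4p7 (R : realType) (n : nat) (hn : (2 <= n)%N) :
  [set closure C | C in regions (arrangement (conv (@rootsC R n)))] =
  [set cone F | F in facets (conv (@rootsC R n))].
Proof.
rewrite cones_facets_conv_rootsC 1?ltnW // /regions setC_arrangement_conv_rootsC //.
apply/seteqP; split => D [C].
  move=> [x [x_neq0 ->]] <-; exists x => //.
  by rewrite connected_component_coord_nonzero // closure_open_orthant.
move=> c_neq0 <-; exists (connected_component (@coord_nonzero R n) C); first by exists C.
by rewrite connected_component_coord_nonzero // closure_open_orthant.
Qed.
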